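(* Let $P$ be a regular polygon surface all of whose faces have degree in $\{5,7,8,9,10\}$, and let $f$ be a face of $P$ of degree $n\geq 7$. If $f$ has positive facial curvature, then every vertex incident to $f$ has the form $(5^2,n)$, i.e. has degree three and is incident to exactly two faces of degree five and one face (namely $f$) of degree $n$. Moreover, if $f$ is incident to a vertex with negative vertex curvature, then $f$ has negative facial curvature.
   Context: A regular polygon surface (RPS) is a triple $(\Sigma,\Gamma,\psi)$ where $\Gamma$ is a finite graph embedded in a closed surface $\Sigma$ so that every face (component of $\Sigma\setminus\Gamma$) has closure a closed $2$-cell, the closures of two faces meet in the empty set, a vertex, or an edge, and $\psi:\Sigma\to\mathbb{R}^3$ is continuous and maps each face of degree $k$ (number of incident edges) onto a regular Euclidean $k$-gon with unit edge lengths; the images of two adjacent faces meet in exactly one vertex or exactly one edge with its endpoints. The vertex curvature $k_v$ of a vertex $v$ is $2\pi$ minus the sum, over faces containing $v$, of the interior angle at $v$ of the regular polygon that is the image of that face. The facial curvature of a face $f$ is $k_f=\sum_{v\in f} k_v/d_v$, summing over vertices $v$ incident to $f$, where $d_v$ is the degree of $v$. *)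

From HB Require Import structures.
From mathcomp Require Import all_boot all_order all_algebra.
From mathcomp Require Import reals trigo.
Set Implicit Arguments. Unset Strict Implicit. Unset Printing Implicit Defensive.
Import Order.TTheory GRing.Theory Num.Theory.
Local Open Scope ring_scope.

(* Combinatorial model of the embedded graph Gamma in the closed surface Sigma:
   V = vertices, F = faces, bnd f = the boundary cycle of (the closure of) face f,
   listed as a cyclic sequence of vertices. *)

Section RPS.
Variables (V F : finType) (bnd : F -> seq V).

Definition fedge (f : F) (x y : V) : bool :=
  [&& x \in bnd f, y \in bnd f & (next (bnd f) x == y) || (next (bnd f) y == x)].

Definition is_edge (x y : V) : bool := [exists g, fedge g x y].

Definition fdeg (f : F) : nat := size (bnd f).

Definition vdeg (v : V) : nat := #|[set w | is_edge v w]|.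

Definition link_adj (v : V) (f g : F) : bool :=
  [&& f != g, v \in bnd f, v \in bnd g & [exists w, fedge f v w && fedge g v w]].

Definition face_touch (f g : F) : bool := [exists v, (v \in bnd f) && (v \in bnd g)].

(* Combinatorial conditions: Gamma cellularly embedded in a closed (connected)
   surface, every face a closed 2-cell (simple boundary cycle), closures of two
   distinct faces meet in empty set, a vertex, or an edge. *)
Definition comb_surface : Prop :=
  [/\ (forall f, uniq (bnd f) /\ (3 <= size (bnd f))%N),
      (forall v, exists f, v \in bnd f),
      (forall x y, is_edge x y -> #|[set g | fedge g x y]| = 2),
      (forall v f g, v \in bnd f -> v \in bnd g -> connect (link_adj v) f g) &
      ((forall f g, connect face_touch f g) /\
      (forall f g, f != g ->
         let S := [set v | (v \in bnd f) && (v \in bnd g)] in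
         (#|S| <= 2)%N /\
         (forall x y, x \in S -> y \in S -> x != y -> fedge f x y && fedge g x y)))].

End RPS.

Section Geometry.
Variable R : realType.
Local Notation pt := 'rV[R]_3.

Definition dot (u w : pt) : R := \sum_(i < 3) u 0 i * w 0 i.

(* p_0, ..., p_(k-1) (in this cyclic order) are the vertices of a regular
   Euclidean k-gon with unit edge lengths *)
Definition regular_unit_polygon (s : seq pt) : Prop :=
  let k := size s in
  exists (c e1 e2 : pt) (t0 : R),
    [/\ dot e1 e1 = 1, dot e2 e2 = 1, dot e1 e2 = 0 &
      forall j : nat, (j < k)%N ->
        nth 0 s j = c + (2 * sin (pi / k%:R))^-1 *:
          (cos (t0 + 2 * pi * j%:R / k%:R) *: e1 +
           sin (t0 + 2 * pi * j%:R / k%:R) *: e2)].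

Definition in_conv (s : seq pt) (x : pt) : Prop :=
  exists l : nat -> R,
    [/\ forall i, 0 <= l i,
        \sum_(i < size s) l i = 1 &
        x = \sum_(i < size s) l i *: nth 0 s i].

Variables (V F : finType) (bnd : F -> seq V).

(* psi restricted to the vertices; the image of a face is the (closed) regular
   polygon spanned by the images of its boundary vertices *)
Definition is_RPS (psi : V -> pt) : Prop :=
  [/\ comb_surface bnd,
      (forall f, regular_unit_polygon (map psi (bnd f))) &
      (forall f g, f != g -> face_touch bnd f g ->
         forall x, (in_conv (map psi (bnd f)) x /\ in_conv (map psi (bnd g)) x)
                   <-> in_conv (map psi [seq v <- bnd f | v \in bnd g]) x)].

Definition int_angle (k : nat) : R := (k%:R - 2) * pi / k%:R.

Definition vertex_curv (v : V) : R :=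
  2 * pi - \sum_(g : F | v \in bnd g) int_angle (fdeg bnd g).

Definition face_curv (f : F) : R :=
  \sum_(v : V | v \in bnd f) vertex_curv v / (vdeg bnd v)%:R.

End Geometry.

Definition form_55n (V F : finType) (bnd : F -> seq V) (v : V) (n : nat) : Prop :=
  [/\ vdeg bnd v = 3%N,
      #|[set g | (v \in bnd g) && (fdeg bnd g == 5%N)]| = 2%N &
      #|[set g | (v \in bnd g) && (fdeg bnd g == n)]| = 1%N].

(* The face angles at a vertex are angles between unit edge vectors, so Gram
   inequalities |sum_i l_i e_i|^2 >= 0 constrain them.  At a vertex with three
   faces, one of them a face f of degree n >= 7, they exclude a second face of
   degree at least 7 (cos (2 pi / 5) >= 0.3 and cos (2 pi / 7) >= 0.62), so the
   vertex is of type (5^2, n) and has curvature 4 pi / 5 - I >= 0, where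
   I = (n - 2) pi / n and n <= 10.  A vertex of f with d >= 4 faces
   contributes at most (13 pi / 5 - I) / d - 3 pi / 5 to the facial curvature
   of f, and a vertex of type (5^2, n) exactly this amount with d = 3; hence
   one vertex with d >= 4 makes the facial curvature negative, unless n = 7
   and d = 4.  In that case
   the two neighbours of the vertex on f cannot both be of type (5^2, 7): the
   linear recurrence between consecutive vertices of a regular polygon
   expresses all edges around them through four unit vectors whose Gram
   inequality fails. *)

From mathcomp Require Import all_boot all_order all_algebra.
From mathcomp Require Import reals trigo.
From mathcomp Require Import zify ring lra.
Set Implicit Arguments. Unset Strict Implicit. Unset Printing Implicit Defensive.
Import Order.TTheory GRing.Theory Num.Theory.

Section CycleNeighbours.
Variable T : eqType.
Implicit Types (p : seq T) (x : T).

Definition cyc_succ (k i : nat) : nat := if i.+1 == k then 0 else i.+1.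
Definition cyc_pred (k i : nat) : nat := if i == 0 then k.-1 else i.-1.

Lemma cyc_succ_lt k i : i < k -> cyc_succ k i < k.
Proof. by rewrite /cyc_succ; case: eqP; lia. Qed.

Lemma cyc_pred_lt k i : i < k -> cyc_pred k i < k.
Proof. by rewrite /cyc_pred; case: eqP; lia. Qed.

Lemma next_cyc_succ p x : x \in p -> next p x = nth x p (cyc_succ (size p) (index x p)).
Proof.
move=> xp; rewrite next_nth xp; case: p xp => [//|y p] xp.
have := xp; rewrite -index_mem /cyc_succ => ilt.
case: eqP => [/eqP|ne]; first by rewrite eqSS => /eqP ->; rewrite /= nth_default.
by rewrite [RHS]/=; apply: set_nth_default; move: ilt ne => /=; lia.
Qed.

Lemma prev_cyc_pred p x : uniq p -> x \in p ->
  prev p x = nth x p (cyc_pred (size p) (index x p)).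
Proof.
move=> up xp; rewrite prev_nth xp; case: p up xp => [//|y p] /= /andP[yp _] xp.
rewrite /cyc_pred /=; have [<-|yx] := eqVneq y x.
  by rewrite memNindex.
by apply: set_nth_default; rewrite /= ltnS index_size.
Qed.

Lemma next_prev_neq p x : uniq p -> x \in p -> 2 < size p ->
  [/\ next p x != x, prev p x != x & next p x != prev p x].
Proof.
move=> up xp p3; rewrite next_cyc_succ // prev_cyc_pred //.
set i := index x p; have ip : i < size p by rewrite index_mem.
have {2 4}-> : x = nth x p i by rewrite nth_index.
rewrite !nth_uniq ?cyc_succ_lt ?cyc_pred_lt //.
by rewrite /cyc_succ /cyc_pred; split; repeat case: ifP => /eqP ?; lia.
Qed.

End CycleNeighbours.

Lemma uniq_size_le_card (T : finType) (s : seq T) (A : {set T}) :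
  uniq s -> all [in A] s -> size s <= #|A|.
Proof.
move=> us /allP sA; rewrite -(card_uniqP us); apply: subset_leq_card.
by apply/subsetP => z /sA.
Qed.

Lemma uniq_card_mem (T : finType) (s : seq T) (A : {set T}) z :
  uniq s -> all [in A] s -> #|A| <= size s -> z \in A -> z \in s.
Proof.
move=> us sA As zA; apply: contraTT As => zs; rewrite -ltnNge.
by apply: (uniq_size_le_card (s := z :: s)); rewrite /= ?zs ?us ?zA.
Qed.

Lemma sum_nat_of_bool (T : finType) (P : pred T) : \sum_t (P t : nat) = #|P|.
Proof.
by rewrite -sum1_card [RHS]big_mkcond; apply: eq_bigr => t _; rewrite unfold_in; case: (P t).
Qed.

(** * Combinatorics of the surface *)

Section SurfaceCombinatorics.
Variables (V F : finType) (bnd : F -> seq V).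
Hypothesis surf : comb_surface bnd.
Local Notation fedge := (fedge bnd).

Definition faces_at (v : V) : {set F} := [set g | v \in bnd g].
Definition nbrs (v : V) : {set V} := [set w | is_edge bnd v w].

Lemma in_faces_at g v : (g \in faces_at v) = (v \in bnd g).
Proof. by rewrite inE. Qed.

Lemma bnd_uniq f : uniq (bnd f).
Proof. by case: surf => H _ _ _ _; case: (H f). Qed.

Lemma bnd_size f : 2 < size (bnd f).
Proof. by case: surf => H _ _ _ _; case: (H f). Qed.

Lemma card_edge_faces x y : is_edge bnd x y -> #|[set g | fedge g x y]| = 2.
Proof. by case: surf => _ _ H _ _; apply: H. Qed.

Lemma common_vertices_le2 f g x y z : f != g -> uniq [:: x; y; z] ->
  x \in bnd f -> y \in bnd f -> z \in bnd f -> x \in bnd g -> y \in bnd g ->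
  z \notin bnd g.
Proof.
case: surf => _ _ _ _ [_ H] /H[+ _] xyz xf yf zf xg yg; apply: contraTN => zg.
by rewrite -ltnNge (leq_trans _ (uniq_size_le_card xyz _)) //= !inE xf yf zf xg yg zg.
Qed.

Lemma fedge_sym g x y : fedge g x y = fedge g y x.
Proof. by rewrite /fedge orbC andbCA. Qed.

Lemma fedge_meml g x y : fedge g x y -> x \in bnd g.
Proof. by case/and3P. Qed.

Lemma fedge_memr g x y : fedge g x y -> y \in bnd g.
Proof. by case/and3P. Qed.

Lemma fedge_is_edge g x y : fedge g x y -> is_edge bnd x y.
Proof. by move=> gxy; apply/existsP; exists g. Qed.

Lemma fedge_nbrs g v w : fedge g v w -> w \in nbrs v.
Proof. by rewrite inE; apply: fedge_is_edge. Qed.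

Lemma fedgeE g v w : v \in bnd g ->
  fedge g v w = (w == next (bnd g) v) || (w == prev (bnd g) v).
Proof.
move=> vg; rewrite /fedge vg /=.
apply/andP/orP => [[_ /orP[/eqP<-|/eqP<-]]|[/eqP->|/eqP->]].
- by left.
- by right; rewrite prev_next ?bnd_uniq.
- by rewrite mem_next vg eqxx.
- by rewrite mem_prev vg next_prev ?bnd_uniq // eqxx orbT.
Qed.

Lemma fedge_next g v : v \in bnd g -> fedge g v (next (bnd g) v).
Proof. by move=> vg; rewrite fedgeE // eqxx. Qed.

Lemma fedge_prev g v : v \in bnd g -> fedge g v (prev (bnd g) v).
Proof. by move=> vg; rewrite fedgeE // eqxx orbT. Qed.

Lemma fedge_neq g x y : fedge g x y -> x != y.
Proof.
move=> gxy; have xg := fedge_meml gxy; move: gxy; rewrite fedgeE //.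
have [nx px _] := next_prev_neq (bnd_uniq g) xg (bnd_size g).
by case/orP => /eqP->; rewrite eq_sym.
Qed.

Lemma fedge2_cases g v x y : fedge g v x -> fedge g v y -> x != y ->
  (x = next (bnd g) v /\ y = prev (bnd g) v) \/ (x = prev (bnd g) v /\ y = next (bnd g) v).
Proof.
move=> gx gy; have vg := fedge_meml gx; move: gx gy; rewrite !fedgeE //.
by case/orP => /eqP->; case/orP => /eqP->; rewrite ?eqxx //; [left | right].
Qed.

Lemma fedge_other_end g v x : fedge g v x -> exists2 y, fedge g v y & y != x.
Proof.
move=> gvx; have vg := fedge_meml gvx.
have [_ _ np] := next_prev_neq (bnd_uniq g) vg (bnd_size g).
have [xn|xn] := eqVneq x (next (bnd g) v).
  by exists (prev (bnd g) v); rewrite ?fedge_prev // xn eq_sym.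
by exists (next (bnd g) v); rewrite ?fedge_next // eq_sym.
Qed.

Lemma fedge_other_face f x y : fedge f x y -> exists2 g, g != f & fedge g x y.
Proof.
move=> fxy; have := card_edge_faces (fedge_is_edge fxy).
rewrite (cardsD1 f) inE fxy add1n => -[] /(congr1 (leq 1)) /card_gt0P[g].
by rewrite !inE => /andP[gf gxy]; exists g.
Qed.

Lemma fedge_third_face f g h x y : f != g ->
  fedge f x y -> fedge g x y -> fedge h x y -> (h == f) || (h == g).
Proof.
move=> fg fxy gxy hxy; apply/contraT; rewrite negb_or => /andP[hf hg].
have : 3 <= #|[set k | fedge k x y]|.
  apply: (uniq_size_le_card (s := [:: f; g; h])); last by rewrite /= !inE fxy gxy hxy.
  by rewrite /= !inE negb_or fg (eq_sym f) (eq_sym g) hf hg.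
by rewrite (card_edge_faces (fedge_is_edge fxy)).
Qed.

(* Double counting of the pairs (g, w) such that [vw] is an edge of [g]. *)
Lemma card_nbrs v : #|nbrs v| = #|faces_at v|.
Proof.
have row g : \sum_w (fedge g v w : nat) = (v \in bnd g) * 2.
  rewrite sum_nat_of_bool; case vg: (v \in bnd g).
    have [_ _ np] := next_prev_neq (bnd_uniq g) vg (bnd_size g).
    transitivity #|[set next (bnd g) v; prev (bnd g) v]|; last by rewrite cards2 np.
    by apply: eq_card => w; rewrite !inE -fedgeE.
  by apply: eq_card0 => w; rewrite unfold_in /fedge vg.
have col w : \sum_g (fedge g v w : nat) = (is_edge bnd v w) * 2.
  rewrite sum_nat_of_bool; case e: (is_edge bnd v w).
    by rewrite mul1n -(card_edge_faces e); apply: eq_card => g; rewrite inE.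
  by apply: eq_card0 => g; rewrite unfold_in; apply: contraFF e; apply: fedge_is_edge.
have : \sum_g \sum_w (fedge g v w : nat) = \sum_w \sum_g (fedge g v w : nat).
  exact: exchange_big.
rewrite (eq_bigr _ (fun g _ => row g)) (eq_bigr _ (fun w _ => col w)) -!big_distrl /=.
rewrite !sum_nat_of_bool => /eqP; rewrite eqn_pmul2r // => /eqP.
by rewrite /nbrs /faces_at !cardsE.
Qed.

Section VertexLink.
Variables (f : F) (v n p : V) (ga gb : F).
Hypotheses (f_n : fedge f v n) (f_p : fedge f v p) (np : n != p).
Hypotheses (gaf : ga != f) (gbf : gb != f) (ga_n : fedge ga v n) (gb_p : fedge gb v p).

Lemma flank_faces : [/\ p \notin bnd ga, n \notin bnd gb & ga != gb].
Proof.
have vf := fedge_meml f_n; have nf := fedge_memr f_n; have pf := fedge_memr f_p.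
have [vn vp] := (fedge_neq f_n, fedge_neq f_p).
have pga : p \notin bnd ga.
  apply: (common_vertices_le2 _ _ vf nf pf (fedge_meml ga_n) (fedge_memr ga_n)).
    by rewrite eq_sym.
  by rewrite /= !inE negb_or vn vp np.
have ngb : n \notin bnd gb.
  apply: (common_vertices_le2 _ _ vf pf nf (fedge_meml gb_p) (fedge_memr gb_p)).
    by rewrite eq_sym.
  by rewrite /= !inE negb_or vn vp eq_sym np.
by split=> //; apply: contraTneq (fedge_memr gb_p) => <-.
Qed.

Lemma faces_at_card3 : #|faces_at v| = 3 ->
  faces_at v = [set f; ga; gb] /\
  exists w, [/\ fedge ga v w, fedge gb v w, w != n & w != p].
Proof.
move=> card3; have [pga ngb gab] := flank_faces; have vf := fedge_meml f_n.
split.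
  apply/setP => g; apply/idP/idP => [gv|]; last first.
    by rewrite !inE -orbA => /or3P[] /eqP->; rewrite ?vf ?(fedge_meml ga_n) ?(fedge_meml gb_p).
  have := uniq_card_mem (s := [:: f; ga; gb]) _ _ _ gv.
  rewrite /= !inE negb_or !(eq_sym f) gaf gbf gab vf (fedge_meml ga_n) (fedge_meml gb_p).
  by rewrite card3 -orbA; apply.
have [wa ga_wa wan] := fedge_other_end ga_n.
have [wb gb_wb wbp] := fedge_other_end gb_p.
have wap : wa != p by apply: (contraNneq _ pga) => <-; apply: fedge_memr ga_wa.
have wbn : wb != n by apply: (contraNneq _ ngb) => <-; apply: fedge_memr gb_wb.
exists wb; split=> //.
have := uniq_card_mem (s := [:: n; p; wa]) _ _ _ (fedge_nbrs gb_wb).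
rewrite /= (fedge_nbrs f_n) (fedge_nbrs f_p) (fedge_nbrs ga_wa) card_nbrs card3.
rewrite !inE negb_or np (eq_sym n) wan (eq_sym p) wap (negbTE wbn) (negbTE wbp).
by move=> /(_ isT isT isT) /eqP ->.
Qed.

(* The fourth face at [v] has its two edges at [v] among the four edges at [v],
   and not on [vn] or [vp], which already lie on two faces. *)
Lemma faces_at_card4 a b : #|faces_at v| = 4 ->
  fedge ga v a -> a != n -> fedge gb v b -> b != p ->
  a != b /\ exists2 gx, fedge gx v a & fedge gx v b.
Proof.
move=> card4 ga_a an gb_b bp; have [pga ngb gab] := flank_faces.
have [gx gxv gx_new] : exists2 gx, gx \in faces_at v & gx \notin [:: f; ga; gb].
  apply/exists_inP; apply: contraT; rewrite negb_exists_in => /forall_inP sub.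
  suff : #|faces_at v| <= 3 by rewrite card4.
  apply: leq_trans (card_size [:: f; ga; gb]); apply: subset_leq_card.
  by apply/subsetP => g /sub; rewrite negbK.
move: gx_new; rewrite !inE !negb_or => /and3P[gxf gxa gxb].
have vgx : v \in bnd gx by rewrite inE in gxv.
set x := next (bnd gx) v; set y := prev (bnd gx) v.
have [_ _ xy] := next_prev_neq (bnd_uniq gx) vgx (bnd_size gx).
have gx_x : fedge gx v x := fedge_next vgx.
have gx_y : fedge gx v y := fedge_prev vgx.
have off_f z : fedge gx v z -> (z != n) && (z != p).
  move=> gx_z; apply/andP; split; apply/eqP => zE; rewrite zE in gx_z.
    have := fedge_third_face gaf ga_n f_n gx_z.
    by rewrite (negbTE gxa) (negbTE gxf).
  have := fedge_third_face gbf gb_p f_p gx_z.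
  by rewrite (negbTE gxb) (negbTE gxf).
have /andP[xn xp] := off_f x gx_x; have /andP[yn yp] := off_f y gx_y.
have on_gx z : z \in nbrs v -> z != n -> z != p -> fedge gx v z.
  move=> zv zn zp; have := uniq_card_mem (s := [:: n; p; x; y]) _ _ _ zv.
  rewrite /= (fedge_nbrs f_n) (fedge_nbrs f_p).
  rewrite (fedge_nbrs gx_x) (fedge_nbrs gx_y) card_nbrs card4 !inE !negb_or.
  rewrite np (eq_sym n) xn (eq_sym n) yn (eq_sym p) xp (eq_sym p) yp xy.
  by rewrite (negbTE zn) (negbTE zp) fedgeE //; apply.
have ap : a != p by apply: (contraNneq _ pga) => <-; apply: fedge_memr ga_a.
have bn : b != n by apply: (contraNneq _ ngb) => <-; apply: fedge_memr gb_b.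
have gx_a := on_gx a (fedge_nbrs ga_a) an ap.
have gx_b := on_gx b (fedge_nbrs gb_b) bn bp.
split; last by exists gx.
apply: (contraNneq _ gxa) => ab; rewrite -ab in gb_b.
by have := fedge_third_face gab ga_a gb_b gx_a; rewrite (negbTE gxb) orbF.
Qed.

End VertexLink.

Lemma card_faces_at_ge3 f v : v \in bnd f -> 3 <= #|faces_at v|.
Proof.
move=> vf; have [ga gaf ga_n] := fedge_other_face (fedge_next vf).
have [gb gbf gb_p] := fedge_other_face (fedge_prev vf).
have [_ _ np] := next_prev_neq (bnd_uniq f) vf (bnd_size f).
have [_ _ gab] := flank_faces (fedge_next vf) (fedge_prev vf) np gaf gbf ga_n gb_p.
apply: (uniq_size_le_card (s := [:: f; ga; gb])).
  by rewrite /= !inE negb_or !(eq_sym f) gaf gbf gab.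
by rewrite /= !inE vf (fedge_meml ga_n) (fedge_meml gb_p).
Qed.

End SurfaceCombinatorics.

(** * Regular polygons in space *)

Local Open Scope ring_scope.

Section Dot.
Variable R : realType.
Implicit Types u v w : 'rV[R]_3.

Lemma dotC u w : dot u w = dot w u.
Proof. by apply: eq_bigr => i _; rewrite mulrC. Qed.

Lemma dotDl u v w : dot (u + v) w = dot u w + dot v w.
Proof. by rewrite /dot -big_split; apply: eq_bigr => i _; rewrite mxE mulrDl. Qed.

Lemma dotZl (a : R) u w : dot (a *: u) w = a * dot u w.
Proof. by rewrite /dot mulr_sumr; apply: eq_bigr => i _; rewrite mxE mulrA. Qed.

Lemma dotNl u w : dot (- u) w = - dot u w.
Proof. by rewrite -scaleN1r dotZl mulN1r. Qed.

Lemma dotBl u v w : dot (u - v) w = dot u w - dot v w.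
Proof. by rewrite dotDl dotNl. Qed.

Lemma dotDr u v w : dot w (u + v) = dot w u + dot w v.
Proof. by rewrite dotC dotDl !(dotC w). Qed.

Lemma dotZr (a : R) u w : dot w (a *: u) = a * dot w u.
Proof. by rewrite dotC dotZl dotC. Qed.

Lemma dotNr u w : dot w (- u) = - dot w u.
Proof. by rewrite dotC dotNl dotC. Qed.

Lemma dotBr u v w : dot w (u - v) = dot w u - dot w v.
Proof. by rewrite dotDr dotNr. Qed.

Lemma dotxx_ge0 u : 0 <= dot u u.
Proof. by apply: sumr_ge0 => i _; rewrite -expr2 sqr_ge0. Qed.

Definition dotE := (dotDl, dotBl, dotZl, dotNl, dotDr, dotBr, dotZr, dotNr).

End Dot.

Section RegularPolygon.
Variable R : realType.
Local Notation pt := 'rV[R]_3.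

Definition ext_cos (k : nat) : R := cos (2 * pi / k%:R).
Definition circumradius (k : nat) : R := (2 * sin (pi / k%:R))^-1.
Definition circle_pt (rho : R) (e1 e2 : pt) (t : R) : pt :=
  rho *: (cos t *: e1 + sin t *: e2).

Lemma circumradius_sqr k : (2 < k)%N -> circumradius k ^+ 2 * (2 - 2 * ext_cos k) = 1.
Proof.
move=> k3; have kp : (0 : R) < k%:R by rewrite ltr0n; lia.
have s0 : 0 < sin (pi / k%:R :> R).
  apply: sin_gt0_pi; rewrite divr_gt0 ?pi_gt0 //= ltr_pdivrMr // ltr_pMr ?pi_gt0 //.
  by rewrite ltr1n; lia.
rewrite /ext_cos (_ : 2 * pi / k%:R = (pi / k%:R) *+ 2); last by rewrite mulr2n; field; lra.
by rewrite cos_mulr2n cos2sin2 mulr2n /circumradius; field; lra.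
Qed.

Variables (e1 e2 : pt).
Hypotheses (e11 : dot e1 e1 = 1) (e22 : dot e2 e2 = 1) (e12 : dot e1 e2 = 0).

Lemma dot_circle_pt rho t1 t2 :
  dot (circle_pt rho e1 e2 t1) (circle_pt rho e1 e2 t2) = rho ^+ 2 * cos (t1 - t2).
Proof. by rewrite /circle_pt !dotE e11 e22 e12 (dotC e2 e1) e12 cosB; ring. Qed.

Lemma circle_ptDB rho t a :
  circle_pt rho e1 e2 (t + a) + circle_pt rho e1 e2 (t - a) =
  (2 * cos a) *: circle_pt rho e1 e2 t.
Proof. by apply/rowP => i; rewrite !mxE cosD cosB sinD sinB; ring. Qed.

Lemma circle_ptD2pi rho t : circle_pt rho e1 e2 (t + pi *+ 2) = circle_pt rho e1 e2 t.
Proof. by rewrite /circle_pt cosD2pi sinD2pi. Qed.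

Variables (k : nat) (C : pt) (t0 : R).
Hypothesis k3 : (2 < k)%N.

Definition polygon_vertex (j : nat) : pt :=
  C + circle_pt (circumradius k) e1 e2 (t0 + 2 * pi * j%:R / k%:R).

Local Notation theta j := (t0 + 2 * pi * j%:R / k%:R).
Local Notation phi := (2 * pi / k%:R).
Local Notation circ := (circle_pt (circumradius k) e1 e2).

Lemma polygon_vertex_succ j : (j < k)%N ->
  polygon_vertex (cyc_succ k j) = C + circ (theta j + phi).
Proof.
move=> jk; have kp : (0 : R) < k%:R by rewrite ltr0n; lia.
rewrite /polygon_vertex /cyc_succ; congr (_ + _).
case: eqP => [jk1|_]; last by rewrite -natr1; congr circle_pt; field; lra.
rewrite -[in LHS]circle_ptD2pi; congr circle_pt.
have kE : k%:R = j%:R + 1 :> R by rewrite -jk1 natr1.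
have j0 : 0 <= j%:R :> R by [].
by rewrite kE [pi *+ 2]mulr2n; field; lra.
Qed.

Lemma polygon_vertex_pred j : (j < k)%N ->
  polygon_vertex (cyc_pred k j) = C + circ (theta j - phi).
Proof.
move=> jk; have kp : (0 : R) < k%:R by rewrite ltr0n; lia.
rewrite /polygon_vertex /cyc_pred; congr (_ + _).
have k1 : k.-1%:R = k%:R - 1 :> R by rewrite -subn1 natrB //; lia.
case: eqP => [->|j0]; last first.
  rewrite -subn1 natrB; last lia.
  by congr circle_pt; field; lra.
by rewrite -[in RHS]circle_ptD2pi k1; congr circle_pt; rewrite [pi *+ 2]mulr2n; field; lra.
Qed.

Let addrKB (a b : pt) : C + a - (C + b) = a - b.
Proof. by rewrite opprD addrACA subrr add0r. Qed.

Lemma polygon_edge_unit j : (j < k)%N ->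
  dot (polygon_vertex (cyc_succ k j) - polygon_vertex j)
      (polygon_vertex (cyc_succ k j) - polygon_vertex j) = 1.
Proof.
move=> jk; rewrite polygon_vertex_succ // /polygon_vertex addrKB !dotBl !dotBr !dot_circle_pt.
rewrite !subrr cos0 (_ : theta j + phi - theta j = phi); last by ring.
rewrite (_ : theta j - (theta j + phi) = - phi); last by ring.
by rewrite cosN -[RHS](circumradius_sqr k3) /ext_cos; ring.
Qed.

Lemma polygon_corner_dot j : (j < k)%N ->
  dot (polygon_vertex (cyc_pred k j) - polygon_vertex j)
      (polygon_vertex (cyc_succ k j) - polygon_vertex j) = - ext_cos k.
Proof.
move=> jk; rewrite polygon_vertex_succ // polygon_vertex_pred // /polygon_vertex.
rewrite !addrKB !dotBl !dotBr !dot_circle_pt subrr cos0.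
rewrite (_ : theta j - phi - (theta j + phi) = - phi *+ 2); last by rewrite mulr2n; ring.
rewrite (_ : theta j - phi - theta j = - phi); last by ring.
rewrite (_ : theta j - (theta j + phi) = - phi); last by ring.
rewrite cos_mulr2n !cosN -[RHS]mulr1 -[in RHS](circumradius_sqr k3) /ext_cos.
by rewrite mulr2n; ring.
Qed.

Lemma polygon_second_difference j : (j < k)%N ->
  polygon_vertex (cyc_pred k j) + polygon_vertex (cyc_succ k j)
    - (2 * ext_cos k) *: polygon_vertex j = (2 - 2 * ext_cos k) *: C.
Proof.
move=> jk; rewrite polygon_vertex_succ // polygon_vertex_pred // /polygon_vertex.
have := circle_ptDB (circumradius k) (theta j) phi; rewrite /ext_cos.
by move/rowP => E; apply/rowP => i; move: (E i); rewrite !mxE; lra.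
Qed.

End RegularPolygon.

Section ExtCosBounds.
Variable R : realType.

Lemma two_pi_div_in (k : nat) : (2 <= k)%N -> (0 : R) < 2 * pi / k%:R <= (pi : R).
Proof.
move=> k2; have kp : (0 : R) < k%:R by rewrite ltr0n; lia.
have k2' : (2 : R) <= k%:R by rewrite (ler_nat R 2 k).
have pp := @pi_gt0 R.
apply/andP; split; first by apply: divr_gt0 => //; lra.
by rewrite ler_pdivrMr //; nra.
Qed.

Lemma ext_cos_le m k : (2 <= m)%N -> (m <= k)%N -> ext_cos R m <= ext_cos R k.
Proof.
move=> m2 mk; have [->//|mk'] := eqVneq m k.
have /andP[am bm] := two_pi_div_in m2.
have /andP[ak bk] : (0 : R) < 2 * pi / k%:R <= (pi : R) by apply: two_pi_div_in; lia.
have mp : (0 : R) < m%:R by rewrite ltr0n; lia.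
have mk2 : (m%:R : R) < k%:R by rewrite ltr_nat; lia.
have pp := @pi_gt0 R.
rewrite /ext_cos ltW // ltr_cos ?in_itv /= ?(ltW am) ?(ltW ak) ?bm ?bk //.
by rewrite ltr_pM2l ?ltf_pV2 ?posrE //; lra.
Qed.

Lemma cos3 (t : R) : cos (t + t *+ 2) = 4 * cos t ^+ 3 - 3 * cos t.
Proof.
rewrite cosD cos_mulr2n sin_mulr2n.
have -> : sin t * ((cos t * sin t) *+ 2) = 2 * cos t * sin t ^+ 2 by rewrite mulr2n; ring.
by rewrite sin2cos2 mulr2n; ring.
Qed.

Lemma cos_lt1 (t : R) : 0 < t <= pi -> cos t < 1.
Proof.
case/andP => t0 tp; rewrite -cos0 ltr_cos ?in_itv /= ?lexx ?pi_ge0 ?(ltW t0) //.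
Qed.

Lemma ext_cos5_ge : 3 / 10 <= ext_cos R 5.
Proof.
rewrite /ext_cos; set t := 2 * pi / 5%:R; have pp := @pi_gt0 R.
have c1 : cos t < 1 by apply/cos_lt1/two_pi_div_in.
have c0 : 0 < cos t by apply: cos_gt0_pihalf; rewrite /t; apply/andP; split; lra.
have e : t + t *+ 2 = - (t *+ 2) + pi *+ 2 by rewrite /t !mulr2n; field.
have := congr1 cos e; rewrite cosD2pi cosN cos3 cos_mulr2n mulr2n => E.
have /eqP : (cos t - 1) * (4 * cos t ^+ 2 + 2 * cos t - 1) = 0 by lra.
rewrite mulf_eq0 => /orP[/eqP ?|/eqP ?]; first lra.
by clear E; nra.
Qed.

Lemma ext_cos7_ge : 62 / 100 <= ext_cos R 7.
Proof.
rewrite /ext_cos; set t := 2 * pi / 7%:R; have pp := @pi_gt0 R.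
have c1 : cos t < 1 by apply/cos_lt1/two_pi_div_in.
have c0 : 0 < cos t by apply: cos_gt0_pihalf; rewrite /t; apply/andP; split; lra.
have e : (t *+ 2) *+ 2 = - (t + t *+ 2) + pi *+ 2 by rewrite /t !mulr2n; field.
have := congr1 cos e; rewrite cosD2pi cosN cos3 !cos_mulr2n !mulr2n => E.
have /eqP : (cos t - 1) * (8 * cos t ^+ 3 + 4 * cos t ^+ 2 - 4 * cos t - 1) = 0 by lra.
rewrite mulf_eq0 => /orP[/eqP ?|/eqP ?]; first lra.
by clear E; nra.
Qed.

End ExtCosBounds.

Section FaceGeometry.
Variables (R : realType) (V F : finType) (bnd : F -> seq V) (psi : V -> 'rV[R]_3).
Hypothesis rps : is_RPS bnd psi.
Local Notation fedge := (fedge bnd).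
Local Notation c g := (ext_cos R (fdeg bnd g)).

Lemma rps_surface : comb_surface bnd.
Proof. by case: rps. Qed.
Let surf := rps_surface.

Lemma face_polygon g : exists C : 'rV[R]_3, forall v, v \in bnd g ->
  [/\ dot (psi (next (bnd g) v) - psi v) (psi (next (bnd g) v) - psi v) = 1,
      dot (psi (prev (bnd g) v) - psi v) (psi (next (bnd g) v) - psi v) = - c g &
      psi (prev (bnd g) v) + psi (next (bnd g) v) - (2 * c g) *: psi v
        = (2 - 2 * c g) *: C].
Proof.
have [C [e1 [e2 [t0 [e11 e22 e12 vertexE]]]]] : regular_unit_polygon (map psi (bnd g)).
  by case: rps => _ + _; apply.
rewrite size_map in vertexE; exists C => v vg.
have k3 := bnd_size surf g; set k := size (bnd g) in vertexE k3.
have psiE j : (j < k)%N -> psi (nth v (bnd g) j) = polygon_vertex e1 e2 k C t0 j.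
  by move=> jk; rewrite -(nth_map v 0) // vertexE.
have ik : (index v (bnd g) < k)%N by rewrite index_mem.
rewrite (next_cyc_succ vg) (prev_cyc_pred (bnd_uniq surf g) vg).
rewrite -[in psi v](nth_index v vg) !psiE ?cyc_succ_lt ?cyc_pred_lt //.
split; [exact: polygon_edge_unit | exact: polygon_corner_dot |].
exact: polygon_second_difference.
Qed.

Lemma fedge_unit g x y : fedge g x y -> dot (psi y - psi x) (psi y - psi x) = 1.
Proof.
move=> gxy; have [C faceE] := face_polygon g; have xg := fedge_meml gxy.
move: gxy; rewrite fedgeE // => /orP[] /eqP->; first by case: (faceE x xg).
have yg : prev (bnd g) x \in bnd g by rewrite mem_prev.
rewrite -opprB dotNl dotNr opprK -{1 3}(next_prev (bnd_uniq surf g) x).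
by case: (faceE _ yg).
Qed.

Lemma fedge_corner_dot g v x y : fedge g v x -> fedge g v y -> x != y ->
  dot (psi x - psi v) (psi y - psi v) = - c g.
Proof.
move=> gx gy xy; have [C faceE] := face_polygon g.
have [_ corner _] := faceE v (fedge_meml gx).
by case: (fedge2_cases surf gx gy xy) => -[-> ->]; rewrite // dotC.
Qed.

Lemma fedge_second_difference g : exists C : 'rV[R]_3, forall v x y,
  fedge g v x -> fedge g v y -> x != y ->
  psi x + psi y - (2 * c g) *: psi v = (2 - 2 * c g) *: C.
Proof.
have [C faceE] := face_polygon g; exists C => v x y gx gy xy.
have [_ _ second] := faceE v (fedge_meml gx).
case: (fedge2_cases surf gx gy xy) => -[-> ->]; last exact: second.
by rewrite [psi _ + _]addrC.
Qed.

Lemma fedge_recurrence g u v x y :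
  fedge g v u -> fedge g v x -> u != x -> fedge g x v -> fedge g x y -> v != y ->
  psi y - psi x = (2 * c g) *: (psi x - psi v) - (psi v - psi u).
Proof.
move=> gu gx ux gv gy vy; have [C second] := fedge_second_difference g.
move: (second _ _ _ gu gx ux) (second _ _ _ gv gy vy) => /rowP E1 /rowP E2.
by apply/rowP => i; move: (E1 i) (E2 i); rewrite !mxE; lra.
Qed.

End FaceGeometry.

(** * Vertices of a face of degree at least 7 *)

Section UnitVectorConfigurations.
Variable R : realType.
Implicit Types A B E D W X : 'rV[R]_3.

(* Angles of at least arccos (-0.62), arccos (-0.62) and arccos (-0.3) between
   three unit vectors would add up to more than 2 pi. *)
Lemma unit_triple_dot_gt A B W :
  dot A A = 1 -> dot B B = 1 -> dot W W = 1 ->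
  dot A B <= - (62 / 100) -> dot A W <= - (62 / 100) -> - (3 / 10) < dot B W.
Proof.
move=> AA BB WW AB AW; have := dotxx_ge0 (A + B + (93 / 100) *: W).
by rewrite !dotE AA BB WW (dotC B A) (dotC W A) (dotC W B); lra.
Qed.

(* The configuration of [card4_vertex_neighbour]: [E] and [D] are the edges of
   [f] at [v0], [W] and [X] the third edges at its two neighbours, and the last
   hypothesis is the corner at [v0] of its fourth face. *)
Lemma heptagon_link_gram E D W X (h q c : R) :
  62 / 100 <= h -> 3 / 10 <= q -> 3 / 10 <= c ->
  dot E E = 1 -> dot D D = 1 -> dot W W = 1 -> dot X X = 1 ->
  dot E D = - h -> dot E W = q -> dot D X = q ->
  dot ((2 * h) *: E + D) W = - q -> dot ((2 * h) *: D + E) X = - q ->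
  dot (W - (2 * q) *: E) (X - (2 * q) *: D) = - c -> False.
Proof.
move=> h62 q3 c3 EE DD WW XX ED EW DX EDW DEX corner.
have DW : dot D W = - q - 2 * h * q by move: EDW; rewrite !dotE EW; lra.
have EX : dot E X = - q - 2 * h * q by move: DEX; rewrite !dotE DX; lra.
have qh : 3 / 10 * h <= q * h by rewrite ler_wpM2r //; lra.
have qq : 9 / 100 <= q * q by nra.
have qqh : 9 / 100 * h <= q * q * h by rewrite ler_wpM2r //; lra.
have := dotxx_ge0 (W + X + E + D); move: corner.
rewrite !dotE EE DD WW XX ED EW DX DW EX (dotC D E) ED (dotC W E) EW (dotC X E) EX.
rewrite (dotC X D) DX (dotC W D) DW (dotC X W).
lra.
Qed.

End UnitVectorConfigurations.

Section VertexTypes.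
Variables (R : realType) (V F : finType) (bnd : F -> seq V) (psi : V -> 'rV[R]_3).
Hypothesis rps : is_RPS bnd psi.
Hypothesis face_degs : forall g, fdeg bnd g \in [:: 5; 7; 8; 9; 10]%N.
Local Notation fedge := (fedge bnd).
Local Notation faces_at := (faces_at bnd).
Local Notation c g := (ext_cos R (fdeg bnd g)).
Let surf := rps_surface rps.

Lemma fdeg_ge5 g : (5 <= fdeg bnd g)%N.
Proof. by move: (face_degs g); rewrite !inE; lia. Qed.

Lemma fdeg_ge7 g : fdeg bnd g != 5%N -> (7 <= fdeg bnd g)%N.
Proof. by move: (face_degs g); rewrite !inE; lia. Qed.

Lemma ext_cos_ge3 g : 3 / 10 <= c g.
Proof. exact: le_trans (ext_cos5_ge R) (ext_cos_le _ _ (fdeg_ge5 g)). Qed.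

Lemma ext_cos_ge62 g : (7 <= fdeg bnd g)%N -> 62 / 100 <= c g.
Proof. by move=> g7; apply: le_trans (ext_cos7_ge R) (ext_cos_le _ _ g7). Qed.

Lemma card3_vertex_pentagons f v g : v \in bnd f -> (7 <= fdeg bnd f)%N ->
  #|faces_at v| = 3 -> v \in bnd g -> g != f -> fdeg bnd g = 5%N.
Proof.
move=> vf f7 card3 vg gf.
have [f_n f_p] := (fedge_next surf vf, fedge_prev surf vf).
have [_ _ np] := next_prev_neq (bnd_uniq surf f) vf (bnd_size surf f).
have [ga gaf ga_n] := fedge_other_face surf f_n.
have [gb gbf gb_p] := fedge_other_face surf f_p.
have [facesE [w [ga_w gb_w wn wp]]] := faces_at_card3 surf f_n f_p np gaf gbf ga_n gb_p card3.
rewrite eq_sym in wn; rewrite eq_sym in wp.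
have AA := fedge_unit rps f_n; have BB := fedge_unit rps f_p; have WW := fedge_unit rps ga_w.
have AB := fedge_corner_dot rps f_n f_p np.
have AW := fedge_corner_dot rps ga_n ga_w wn.
have BW := fedge_corner_dot rps gb_p gb_w wp.
have ga5 : fdeg bnd ga = 5%N.
  apply/eqP; apply: contraT => /fdeg_ge7/ext_cos_ge62 ga7.
  have := unit_triple_dot_gt AA BB WW; rewrite AB AW BW.
  by have := ext_cos_ge62 f7; have := ext_cos_ge3 gb; lra.
have gb5 : fdeg bnd gb = 5%N.
  apply/eqP; apply: contraT => /fdeg_ge7/ext_cos_ge62 gb7.
  have := unit_triple_dot_gt BB AA WW; rewrite dotC AB AW BW.
  by have := ext_cos_ge62 f7; have := ext_cos_ge3 ga; lra.
have : g \in faces_at v by rewrite inE.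
by rewrite facesE !inE (negbTE gf) => /orP[] /eqP->.
Qed.

Lemma form_55n_card3 f v : v \in bnd f -> (7 <= fdeg bnd f)%N -> #|faces_at v| = 3 ->
  form_55n bnd v (fdeg bnd f).
Proof.
move=> vf f7 card3; have pent := card3_vertex_pentagons vf f7 card3.
split.
- by rewrite -[vdeg _ _]/#|nbrs bnd v| (card_nbrs surf).
- transitivity #|faces_at v :\ f|.
    apply: eq_card => g; rewrite !inE.
    have [->|gf] := eqVneq g f; last by case vg: (v \in bnd g); rewrite //= (pent g).
    by rewrite vf /=; apply/negbTE; apply: contraTneq f7 => ->.
  by move: card3; rewrite (cardsD1 f) in_faces_at vf => -[].
- rewrite -(cards1 f); apply: eq_card => g; rewrite !inE.
  have [->|gf] := eqVneq g f; first by rewrite vf eqxx.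
  case vg: (v \in bnd g); rewrite //= (pent g) //.
  by apply/negbTE; apply: contraTneq f7 => <-.
Qed.

(* [x] has three faces and follows [u] and [v] on [f]; [g] is the face beyond
   the edge [vx] and [a] the vertex after [v] on [g]. *)
Lemma card3_vertex_link f u v x y g a : (7 <= fdeg bnd f)%N ->
  fedge f v u -> fedge f v x -> u != x -> fedge f x y -> v != y -> #|faces_at x| = 3 ->
  g != f -> fedge g v x -> fedge g v a -> a != x ->
  exists w, [/\ dot (psi w - psi x) (psi w - psi x) = 1,
    dot (psi x - psi v) (psi w - psi x) = ext_cos R 5,
    dot ((2 * c f) *: (psi x - psi v) + (psi u - psi v)) (psi w - psi x) = - ext_cos R 5 &
    psi a - psi v = (psi w - psi x) - (2 * ext_cos R 5) *: (psi x - psi v)].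
Proof.
move=> f7 f_vu f_vx ux f_xy vy card3 gf g_vx g_va ax.
have f_xv : fedge f x v by rewrite fedge_sym.
have g_xv : fedge g x v by rewrite fedge_sym.
have [g' g'f g'_xy] := fedge_other_face surf f_xy.
have yv : y != v by rewrite eq_sym.
have [_ [w [g'_xw g_xw wy wv]]] := faces_at_card3 surf f_xy f_xv yv g'f gf g'_xy g_xv card3.
have xf := fedge_meml f_xy.
have g5 := card3_vertex_pentagons xf f7 card3 (fedge_meml g_xv) gf.
have g'5 := card3_vertex_pentagons xf f7 card3 (fedge_meml g'_xy) g'f.
have vw : v != w by rewrite eq_sym.
rewrite eq_sym in wy; rewrite eq_sym in ax.
exists w; split.
- exact: (fedge_unit rps g_xw).
- have := fedge_corner_dot rps g_xv g_xw vw.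
  by rewrite g5 -[psi v - psi x]opprB dotNl => /oppr_inj.
- have := fedge_corner_dot rps g'_xy g'_xw wy.
  by rewrite g'5 (fedge_recurrence rps f_vu f_vx ux f_xv f_xy vy) -[psi v - psi u]opprB opprK.
- rewrite (fedge_recurrence rps g_xw g_xv wv g_vx g_va ax) g5.
  by rewrite -[psi v - psi x]opprB -[psi x - psi w]opprB scalerN opprK addrC.
Qed.

Lemma card4_vertex_neighbour f v0 : v0 \in bnd f -> (7 <= fdeg bnd f)%N ->
  #|faces_at v0| = 4 -> exists2 v1, fedge f v0 v1 & (4 <= #|faces_at v1|)%N.
Proof.
move=> v0f f7 card4.
set v1 := next (bnd f) v0; set v6 := prev (bnd f) v0.
have [f01 f06] : fedge f v0 v1 /\ fedge f v0 v6 by rewrite fedge_next ?fedge_prev.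
have [v1f v6f] := (fedge_memr f01, fedge_memr f06).
have [v1_4|v1_3] := boolP (4 <= #|faces_at v1|)%N; first by exists v1.
have [v6_4|v6_3] := boolP (4 <= #|faces_at v6|)%N; first by exists v6.
have card31 : #|faces_at v1| = 3 by move: (card_faces_at_ge3 surf v1f) v1_3; lia.
have card36 : #|faces_at v6| = 3 by move: (card_faces_at_ge3 surf v6f) v6_3; lia.
exfalso.
have [_ _ v16] := next_prev_neq (bnd_uniq surf f) v0f (bnd_size surf f).
have [_ _ v20] := next_prev_neq (bnd_uniq surf f) v1f (bnd_size surf f).
have [_ _ v05] := next_prev_neq (bnd_uniq surf f) v6f (bnd_size surf f).
rewrite prev_next ?bnd_uniq // eq_sym in v20; rewrite next_prev ?bnd_uniq // in v05.
have [g0 g0f g0_01] := fedge_other_face surf f01.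
have [g6 g6f g6_06] := fedge_other_face surf f06.
have [a g0_0a av1] := fedge_other_end surf g0_01.
have [b g6_0b bv6] := fedge_other_end surf g6_06.
have [ab [gx gx_0a gx_0b]] :=
  faces_at_card4 surf f01 f06 v16 g0f g6f g0_01 g6_06 card4 g0_0a av1 g6_0b bv6.
have v61 : v6 != v1 by rewrite eq_sym.
have [w [WW EW EDW aE]] :=
  card3_vertex_link f7 f06 f01 v61 (fedge_next surf v1f) v20 card31 g0f g0_01 g0_0a av1.
have [w' [XX DX DEX bE]] :=
  card3_vertex_link f7 f01 f06 v16 (fedge_prev surf v6f) v05 card36 g6f g6_06 g6_0b bv6.
have corner := fedge_corner_dot rps gx_0a gx_0b ab; rewrite aE bE in corner.
exact: (heptagon_link_gram (ext_cos_ge62 f7) (ext_cos5_ge R) (ext_cos_ge3 gx)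
  (fedge_unit rps f01) (fedge_unit rps f06) WW XX (fedge_corner_dot rps f01 f06 v16)
  EW DX EDW DEX corner).
Qed.

End VertexTypes.

(** * Curvature *)

Lemma sum_le_except (R : numDomainType) (T : finType) (s r : seq T) (t : T -> R) (G : R) :
  uniq s -> uniq r -> {subset r <= s} -> (forall v, v \in s -> v \notin r -> t v <= G) ->
  \sum_(v in s) t v <= \sum_(v <- r) t v + G *+ (size s - size r).
Proof.
move=> us ur rs tG; rewrite (bigID [in r]) /= big_uniq //.
have -> : \sum_(v in s | v \in r) t v = \sum_(v in r) t v.
  by apply: eq_bigl => v; rewrite andb_idl //; apply: rs.
rewrite lerD2l (@le_trans _ _ (\sum_(v in s | v \notin r) G)) //.
  by apply: ler_sum => v /andP[vs vr]; apply: tG.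
rewrite sumr_const -(card_uniqP us) -(card_uniqP ur) -(cardID [in r] [in s]).
have -> : #|[predI [in s] & [in r]]| = #|r|.
  by apply: eq_card => v; rewrite !inE andb_idl //; apply: rs.
rewrite addKn (@eq_card _ _ [predD [in s] & [in r]]) // => v.
by rewrite !inE andbC.
Qed.

Section Curvature.
Variables (R : realType) (V F : finType) (bnd : F -> seq V) (psi : V -> 'rV[R]_3).
Hypothesis rps : is_RPS bnd psi.
Hypothesis face_degs : forall g, fdeg bnd g \in [:: 5; 7; 8; 9; 10]%N.
Local Notation faces_at := (faces_at bnd).
Local Notation I g := (int_angle R (fdeg bnd g)).
Let surf := rps_surface rps.

Lemma int_angle5 : int_angle R 5 = 3 / 5 * pi.
Proof. by rewrite /int_angle; lra. Qed.

Lemma int_angle_ge5 k : (5 <= k)%N -> 3 / 5 * pi <= int_angle R k.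
Proof.
move=> k5; have k5' : 5 <= k%:R :> R by rewrite (ler_nat R 5).
have pp := @pi_gt0 R.
by rewrite /int_angle ler_pdivlMr; nra.
Qed.

Lemma int_angle_le10 k : (0 < k <= 10)%N -> int_angle R k <= 4 / 5 * pi.
Proof.
case/andP=> k0 k10; have k0' : 0 < k%:R :> R by rewrite ltr0n.
have k10' : k%:R <= 10 :> R by rewrite (ler_nat R k 10).
have pp := @pi_gt0 R.
by rewrite /int_angle ler_pdivrMr //; nra.
Qed.

Lemma vertex_curvE f v : v \in bnd f ->
  vertex_curv R bnd v = 2 * pi - I f - \sum_(g in faces_at v :\ f) I g.
Proof.
move=> vf; rewrite /vertex_curv (bigD1 f) //= opprD addrA; congr (_ - _).
by apply: eq_bigl => g; rewrite !inE andbC.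
Qed.

Lemma vertex_curv_le f v : v \in bnd f ->
  vertex_curv R bnd v <= 13 / 5 * pi - I f - #|faces_at v|%:R * (3 / 5 * pi).
Proof.
move=> vf; rewrite (vertex_curvE vf).
have : #|faces_at v :\ f|%:R * (3 / 5 * pi) <= \sum_(g in faces_at v :\ f) I g.
  by rewrite mulr_natl -sumr_const; apply: ler_sum => g _; apply/int_angle_ge5/fdeg_ge5.
have : #|faces_at v| = #|faces_at v :\ f|.+1 by rewrite (cardsD1 f) in_faces_at vf.
by move=> ->; rewrite -natr1; lra.
Qed.

Lemma vertex_curv_card3 f v : v \in bnd f -> (7 <= fdeg bnd f)%N -> #|faces_at v| = 3 ->
  vertex_curv R bnd v = 2 * pi - I f - 6 / 5 * pi.
Proof.
move=> vf f7 card3; rewrite (vertex_curvE vf).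
rewrite (eq_bigr (fun=> 3 / 5 * pi)) => [|g]; last first.
  by rewrite !inE => /andP[gf vg]; rewrite (card3_vertex_pentagons rps face_degs vf) ?int_angle5.
have : #|faces_at v :\ f| = 2%N by move: card3; rewrite (cardsD1 f) in_faces_at vf => -[].
by rewrite sumr_const => ->; congr (_ - _); rewrite mulr2n; lra.
Qed.

Lemma vertex_curv_card3_ge0 f v : v \in bnd f -> (7 <= fdeg bnd f)%N -> #|faces_at v| = 3 ->
  0 <= vertex_curv R bnd v.
Proof.
move=> vf f7 card3; rewrite (vertex_curv_card3 vf f7 card3).
have : I f <= 4 / 5 * pi by apply: int_angle_le10; move: (face_degs f); rewrite !inE; lia.
lra.
Qed.

Definition vertex_share (v : V) : R := vertex_curv R bnd v / (vdeg bnd v)%:R.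

Lemma vertex_share_le f v K : v \in bnd f -> (0 < K <= #|faces_at v|)%N ->
  vertex_share v <= (13 / 5 * pi - I f) / K%:R - 3 / 5 * pi.
Proof.
move=> vf /andP[K0 Kd]; have pp := @pi_gt0 R.
have k0 : 0 < (fdeg bnd f)%:R :> R by rewrite ltr0n (leq_trans _ (fdeg_ge5 face_degs f)).
have X0 : 0 <= 13 / 5 * pi - I f.
  by rewrite subr_ge0 /int_angle ler_pdivrMr //; nra.
have d0 : (0 < #|faces_at v|)%N by lia.
rewrite /vertex_share -[vdeg _ _]/#|nbrs bnd v| card_nbrs // ler_pdivrMr ?ltr0n //.
apply: le_trans (vertex_curv_le vf) _.
rewrite mulrBl [3 / 5 * pi * _]mulrC lerD2r [_ / K%:R * _]mulrAC ler_pdivlMr ?ltr0n //.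
by rewrite ler_wpM2l // ler_nat.
Qed.

Lemma face_curv_le f r : uniq r -> {subset r <= bnd f} ->
  face_curv R bnd f <= \sum_(v <- r) vertex_share v
    + ((13 / 5 * pi - I f) / 3%:R - 3 / 5 * pi) *+ (fdeg bnd f - size r).
Proof.
move=> ur rf; apply: sum_le_except (bnd_uniq surf f) ur rf _ => v vf _.
by apply: vertex_share_le; rewrite //= (card_faces_at_ge3 surf vf).
Qed.

Lemma face_curv_lt0 f v0 : (7 <= fdeg bnd f)%N -> v0 \in bnd f -> (4 <= #|faces_at v0|)%N ->
  face_curv R bnd f < 0.
Proof.
move=> f7 v0f v0_4; have pp := @pi_gt0 R.
have one_bad K : (0 < K <= #|faces_at v0|)%N -> face_curv R bnd f <=
    (13 / 5 * pi - I f) / K%:R - 3 / 5 * pi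
    + ((13 / 5 * pi - I f) / 3%:R - 3 / 5 * pi) *+ (fdeg bnd f).-1.
  move=> Kv0; have v0_sub : {subset [:: v0] <= bnd f} by move=> v; rewrite inE => /eqP->.
  apply: le_trans (face_curv_le (f := f) (r := [:: v0]) isT v0_sub) _.
  by rewrite big_seq1 subn1 lerD2r; apply: vertex_share_le.
have [n7|n8] : fdeg bnd f = 7%N \/ (8 <= fdeg bnd f <= 10)%N.
  by move: (face_degs f) f7; rewrite !inE; lia.
- have [v0_4e|v0_5] := eqVneq #|faces_at v0| 4%N; last first.
    have /one_bad : (0 < 5 <= #|faces_at v0|)%N by rewrite /= ltn_neqAle eq_sym v0_5.
    by move/le_lt_trans; apply; rewrite /int_angle n7 /= -[_ *+ _]mulr_natr; lra.
  have [v1 f_01 v1_4] := card4_vertex_neighbour rps face_degs v0f f7 v0_4e.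
  have v01 := fedge_neq surf f_01.
  have v01_sub : {subset [:: v0; v1] <= bnd f}.
    by move=> v; rewrite !inE => /orP[] /eqP->; rewrite ?v0f ?(fedge_memr f_01).
  apply: le_lt_trans (face_curv_le (r := [:: v0; v1]) _ v01_sub) _; first by rewrite /= inE v01.
  rewrite big_cons big_seq1 /= (_ : (fdeg bnd f - 2)%N = 5%N); last by rewrite n7.
  have /(vertex_share_le v0f) : (0 < 4 <= #|faces_at v0|)%N by rewrite v0_4e.
  have /(vertex_share_le (fedge_memr f_01)) : (0 < 4 <= #|faces_at v1|)%N by [].
  by rewrite /int_angle n7 -[_ *+ 5]mulr_natr; lra.
- have /one_bad : (0 < 4 <= #|faces_at v0|)%N by [].
  move/le_lt_trans; apply; rewrite /int_angle.
  have [->|[->|->]] : fdeg bnd f = 8%N \/ fdeg bnd f = 9%N \/ fdeg bnd f = 10%N by lia.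
  all: by rewrite /= -[_ *+ _]mulr_natr; lra.
Qed.

End Curvature.

Theorem lemma3p1 (R : realType) (V F : finType) (bnd : F -> seq V)
    (psi : V -> 'rV[R]_3) :
  is_RPS bnd psi ->
  (forall g : F, fdeg bnd g \in [:: 5; 7; 8; 9; 10]%N) ->
  forall f : F, (7 <= fdeg bnd f)%N ->
    (0 < face_curv R bnd f ->
       forall v, v \in bnd f -> form_55n bnd v (fdeg bnd f)) /\
    ((exists v, v \in bnd f /\ vertex_curv R bnd v < 0) ->
       face_curv R bnd f < 0).
Proof.
move=> rps face_degs f f7.
have card3_or_lt0 v : v \in bnd f -> #|faces_at bnd v| = 3 \/ face_curv R bnd f < 0.
  move=> vf; have := card_faces_at_ge3 (rps_surface rps) vf.
  rewrite leq_eqVlt => /orP[/eqP<-|v4]; [by left | right].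
  exact: (face_curv_lt0 rps face_degs f7 vf v4).
split=> [curv_gt0 v vf | [v [vf curv_lt0]]].
  case: (card3_or_lt0 v vf) => [card3|]; first exact: (form_55n_card3 rps face_degs vf f7 card3).
  by rewrite ltNge ltW.
case: (card3_or_lt0 v vf) => // card3.
by have := vertex_curv_card3_ge0 rps face_degs vf f7 card3; rewrite leNgt curv_lt0.
Qed.
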